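(* Let $\underline\rho=(\rho_1,\dots,\rho_\ell)$ be a non-decreasing tuple of integers with $\rho_1\ge2$, and let $n$ be an integer. Then there exists a changemaker vector $\bm\sigma$ with stable coefficients $\underline\rho$ and $\bm\sigma\cdot\bm\sigma=n$ if and only if $n\ge N-1$, where \[ N=\sum_{i=1}^\ell\rho_i^2+\max_{1\le k\le\ell}\Big(\rho_k-\sum_{i=1}^{k-1}\rho_i\Big). \]
   Context: A changemaker vector is a nonzero $\bm\sigma\in\mathbb{Z}^r$ (standard pairing) such that for some orthonormal basis $\bm e_1,\dots,\bm e_r$, $\bm\sigma=\sum\sigma_i\bm e_i$ with $\sigma_1=1$ and $\sigma_{i-1}\le\sigma_i\le1+\sigma_1+\dots+\sigma_{i-1}$ for $i=2,\dots,r$. If $m$ is minimal with $\sigma_m\ge2$, the stable coefficients of $\bm\sigma$ are the tuple $(\sigma_m,\dots,\sigma_r)$. *)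

From HB Require Import structures.
From mathcomp Require Import all_boot all_order all_algebra.
Set Implicit Arguments. Unset Strict Implicit. Unset Printing Implicit Defensive.
Import Order.TTheory GRing.Theory Num.Theory.
Local Open Scope ring_scope.

Definition dotz (r : nat) (u v : 'rV[int]_r) : int := \sum_(i < r) u 0 i * v 0 i.

(* An orthonormal family of r vectors in Z^r (automatically a basis of Z^r). *)
Definition orthonormal_basis (r : nat) (e : 'I_r -> 'rV[int]_r) : Prop :=
  forall i j : 'I_r, dotz (e i) (e j) = (i == j)%:Z.

Definition changemaker_coeffs (c : seq int) : Prop :=
  (0 < size c)%N /\ c`_0 = 1 /\
  forall i : nat, (0 < i < size c)%N ->
    c`_i.-1 <= c`_i /\ c`_i <= 1 + \sum_(j < i) c`_j.

Definition changemaker_with (r : nat) (sigma : 'rV[int]_r) (c : seq int) : Prop :=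
  sigma != 0 /\ size c = r /\
  exists e : 'I_r -> 'rV[int]_r,
    orthonormal_basis e /\ sigma = \sum_(i < r) c`_i *: e i /\ changemaker_coeffs c.

Definition stable_coeffs (c : seq int) : seq int := drop (find (fun x => 2 <= x) c) c.

Definition bigN (rho : seq int) : int :=
  \sum_(i < size rho) rho`_i ^+ 2 +
  \big[Num.max/rho`_0]_(k < size rho) (rho`_k - \sum_(i < k) rho`_i).

From HB Require Import structures.
From mathcomp Require Import all_boot all_order all_algebra zify.
Set Implicit Arguments. Unset Strict Implicit. Unset Printing Implicit Defensive.
Import Order.TTheory GRing.Theory Num.Theory.
Local Open Scope ring_scope.

(* A changemaker sequence whose stable part is rho can only be [1^m ++ rho].
   Inside the block of ones the changemaker inequalities hold automatically,
   and at position [m + k] they read [rho_k <= 1 + m + rho_0 + ... + rho_(k-1)];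
   so [1^m ++ rho] is changemaker iff [m >= max_k (rho_k - sum_(i<k) rho_i) - 1]
   (which forces [m >= 1] since [rho_0 >= 2]).  Its norm is [m + sum rho_i^2],
   and every changemaker sequence is realised by the standard basis, so the
   attainable norms are exactly the integers [>= N - 1]. *)

Lemma dotzC r (u v : 'rV[int]_r) : dotz u v = dotz v u.
Proof. by apply: eq_bigr => i _; rewrite mulrC. Qed.

Lemma dotz_suml r (I : finType) (a : I -> int) (u : I -> 'rV[int]_r) w :
  dotz (\sum_i a i *: u i) w = \sum_i a i * dotz (u i) w.
Proof.
rewrite /dotz; under eq_bigr => k _ do rewrite summxE mulr_suml.
rewrite exchange_big; apply: eq_bigr => i _; rewrite mulr_sumr.
by apply: eq_bigr => k _; rewrite mxE mulrA.
Qed.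

Lemma dotz_orthonormal r (e : 'I_r -> 'rV[int]_r) (a : 'I_r -> int) :
  orthonormal_basis e ->
  dotz (\sum_i a i *: e i) (\sum_i a i *: e i) = \sum_i a i ^+ 2.
Proof.
move=> e_on; rewrite dotz_suml; apply: eq_bigr => i _.
rewrite dotzC dotz_suml (bigD1 i) //= e_on eqxx big1 ?addr0 ?mulr1 ?expr2 //.
by move=> j /negbTE ji; rewrite e_on ji mulr0.
Qed.

Lemma orthonormal_basis_delta r : orthonormal_basis (fun i : 'I_r => delta_mx 0 i).
Proof.
move=> i j; rewrite /dotz (bigD1 i) //= big1 ?addr0 => [|k /negbTE ki].
  by rewrite !mxE !eqxx mul1r; case: (i == j).
by rewrite !mxE ki mul0r.
Qed.

Lemma changemaker_normE r (sigma : 'rV[int]_r) c :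
  changemaker_with sigma c -> dotz sigma sigma = \sum_(x <- c) x ^+ 2.
Proof.
move=> [_ [size_c [e [e_on [-> _]]]]].
by rewrite dotz_orthonormal // (big_nth 0) big_mkord size_c.
Qed.

Lemma changemaker_with_row c :
  changemaker_coeffs c -> changemaker_with (\row_(i < size c) c`_i) c.
Proof.
move=> c_cm; have [c_gt0 [c0 _]] := c_cm; split; last split=> //.
  by apply/eqP => /rowP /(_ (Ordinal c_gt0)); rewrite !mxE c0.
exists (fun i => delta_mx 0 i); split; first exact: orthonormal_basis_delta.
split=> //; rewrite [LHS]row_sum_delta.
by apply: eq_bigr => i _; rewrite mxE.
Qed.

Lemma changemaker_coeffsP c :
  changemaker_coeffs c <->
  [/\ c`_0 = 1, sorted <=%R c &
      forall i, (i < size c)%N -> c`_i <= 1 + \sum_(j < i) c`_j].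
Proof.
split=> [[c_gt0 [c0 c_cm]] | [c0 /(sortedP 0) c_sorted le_prefix]].
  split=> //; first by apply/(sortedP 0) => i ltic; case: (c_cm i.+1).
  by case=> [|i] ltic; [rewrite c0 big_ord0 addr0 | case: (c_cm i.+1)].
have c_gt0 : (0 < size c)%N by rewrite lt0n; apply: contraPneq c0 => /size0nil ->.
do 2!split=> //; case=> // i /andP[_ ltic].
by split; [exact: c_sorted | exact: le_prefix].
Qed.

Lemma changemaker_coeffs_ge1 c i :
  changemaker_coeffs c -> (i < size c)%N -> 1 <= c`_i.
Proof.
move=> /changemaker_coeffsP[c0 c_sorted _] ltic; rewrite -c0.
by apply: (sorted_leq_nth le_trans lexx) => //; rewrite inE (leq_ltn_trans _ ltic).
Qed.

Lemma changemaker_stable_ones_cat c rho :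
  changemaker_coeffs c -> stable_coeffs c = rho -> exists m, c = nseq m 1 ++ rho.
Proof.
rewrite /stable_coeffs => c_cm <-; set m := find _ c.
exists (size (take m c)); rewrite -{1}(cat_take_drop m c); congr (_ ++ _).
apply/all_pred1P/(all_nthP 0) => i; rewrite size_take_min ltn_min => /andP[lt_im lt_ic].
rewrite nth_take //=; have := before_find 0 lt_im; rewrite -/m.
by have := changemaker_coeffs_ge1 c_cm lt_ic; case: (c`_i) => [[|[|k]]|k].
Qed.

Lemma nth_ones_cat m (s : seq int) i :
  (nseq m 1 ++ s)`_i = if (i < m)%N then 1 else s`_(i - m).
Proof. by rewrite nth_cat size_nseq nth_nseq; case: ltnP. Qed.

Lemma nth_ones_cat_addn m (s : seq int) k : (nseq m 1 ++ s)`_(m + k) = s`_k.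
Proof. by rewrite nth_ones_cat ltnNge leq_addr addKn. Qed.

Lemma sum_ones_cat_prefix m (s : seq int) k :
  \sum_(j < m + k) (nseq m 1 ++ s)`_j = m%:R + \sum_(j < k) s`_j.
Proof.
rewrite big_split_ord /=; congr (_ + _).
  rewrite (eq_bigr (fun=> 1)) ?sumr_const ?card_ord // => j _.
  by rewrite nth_ones_cat ltn_ord.
by apply: eq_bigr => j _; rewrite nth_ones_cat_addn.
Qed.

Lemma sumsq_ones_cat m (s : seq int) :
  \sum_(x <- nseq m 1 ++ s) x ^+ 2 = m%:R + \sum_(x <- s) x ^+ 2.
Proof. by rewrite big_cat big_nseq expr1n iter_addr_0. Qed.

Lemma sorted_ones_cat m (s : seq int) :
  sorted <=%R s -> 1 <= head 1 s -> sorted <=%R (nseq m 1 ++ s).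
Proof.
move=> s_sorted s_head; case: m => // m /=; elim: m => [|m IHm] //=.
by case: s s_sorted s_head => //= x s -> ->.
Qed.

Lemma stable_coeffs_ones_cat m (rho : seq int) :
  2 <= head 0 rho -> stable_coeffs (nseq m 1 ++ rho) = rho.
Proof.
move=> rho_head; rewrite /stable_coeffs find_cat has_nseq /= andbF size_nseq.
by case: rho rho_head => //= x s ->; rewrite addn0 drop_size_cat ?size_nseq.
Qed.

Lemma changemaker_ones_catP m (rho : seq int) :
  sorted <=%R rho -> 2 <= head 0 rho ->
  changemaker_coeffs (nseq m 1 ++ rho) <->
  (0 < m)%N /\ forall k, (k < size rho)%N -> rho`_k <= 1 + m%:R + \sum_(j < k) rho`_j.
Proof.
move=> rho_sorted rho_head.
have c_sorted : sorted <=%R (nseq m 1 ++ rho).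
  by apply: sorted_ones_cat => //; case: rho rho_head {rho_sorted} => //= x _; lia.
rewrite changemaker_coeffsP size_cat size_nseq nth_ones_cat.
have [-> | m_gt0] := posnP m.
  by rewrite subn0 nth0; split=> [[rho0] | []] //; move: rho_head; rewrite rho0.
split=> [[_ _ le_prefix] | [_ le_prefix]].
  split=> // k lt_k; have := le_prefix (m + k)%N; rewrite ltn_add2l.
  by rewrite nth_ones_cat_addn sum_ones_cat_prefix addrA; apply.
split=> // i lt_i; have [lt_im | le_mi] := ltnP i m.
  rewrite nth_ones_cat lt_im lerDl sumr_ge0 // => j _.
  by rewrite nth_ones_cat (ltn_trans (ltn_ord j) lt_im).
rewrite -(subnKC le_mi) nth_ones_cat_addn sum_ones_cat_prefix addrA.
by apply: le_prefix; lia.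
Qed.

Definition max_gap (rho : seq int) : int :=
  \big[Num.max/rho`_0]_(k < size rho) (rho`_k - \sum_(i < k) rho`_i).

Lemma bigNE rho : bigN rho = \sum_(x <- rho) x ^+ 2 + max_gap rho.
Proof. by rewrite /bigN (big_nth 0) big_mkord. Qed.

Lemma head_le_max_gap rho : rho`_0 <= max_gap rho.
Proof. exact: bigmax_ge_id. Qed.

Lemma max_gap_leP (rho : seq int) x : rho != [::] ->
  reflect (forall k, (k < size rho)%N -> rho`_k <= x + \sum_(i < k) rho`_i)
          (max_gap rho <= x).
Proof.
move=> rho_nil; have rho_gt0 : (0 < size rho)%N by rewrite lt0n size_eq0.
apply: (iffP (bigmax_leP _ _ _ _)) => [[_ le_x] k lt_k | le_x].
  by have := le_x (Ordinal lt_k) isT; rewrite lerBlDr.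
split=> [|k _]; last by rewrite lerBlDr; apply: le_x.
by have := le_x 0%N rho_gt0; rewrite big_ord0 addr0.
Qed.

Lemma changemaker_ones_cat_max_gapP m (rho : seq int) :
  sorted <=%R rho -> 2 <= head 0 rho ->
  changemaker_coeffs (nseq m 1 ++ rho) <-> max_gap rho <= 1 + m%:R.
Proof.
move=> rho_sorted rho_head; have rho_nil : rho != [::] by case: (rho) rho_head.
rewrite changemaker_ones_catP //.
split=> [[_ /(max_gap_leP _ rho_nil)] // | le_max].
split; last exact/(max_gap_leP _ rho_nil).
by have := le_trans rho_head (le_trans (head_le_max_gap rho) le_max); lia.
Qed.

Theorem proposition3p2 (rho : seq int) (n : int) :
  rho != [::] -> sorted <=%R rho -> 2 <= head 0 rho ->
  ((exists (r : nat) (sigma : 'rV[int]_r) (c : seq int),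
      changemaker_with sigma c /\ stable_coeffs c = rho /\ dotz sigma sigma = n)
   <-> bigN rho - 1 <= n).
Proof.
move=> _ rho_sorted rho_head; rewrite bigNE; set Q := \sum_(x <- rho) x ^+ 2.
have cmP m := changemaker_ones_cat_max_gapP m rho_sorted rho_head.
split=> [[r [sigma [c [sigma_cm [c_stable <-]]]]] | n_ge].
  have [_ [_ [_ [_ [_ c_cm]]]]] := sigma_cm.
  have [m c_eq] := changemaker_stable_ones_cat c_cm c_stable.
  rewrite (changemaker_normE sigma_cm) c_eq sumsq_ones_cat.
  by move: c_cm; rewrite c_eq => /cmP; lia.
have gap_ge2 := le_trans rho_head (head_le_max_gap rho).
pose m := `|n - Q|%N.
have m_eq : m%:R = n - Q :> int by lia.
have c_cm : changemaker_coeffs (nseq m 1 ++ rho) by apply/cmP; lia.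
exists (size (nseq m 1 ++ rho)), (\row_i (nseq m 1 ++ rho)`_i), (nseq m 1 ++ rho).
split; first exact: changemaker_with_row.
split; first exact: stable_coeffs_ones_cat.
by rewrite (changemaker_normE (changemaker_with_row c_cm)) sumsq_ones_cat m_eq subrK.
Qed.
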